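(* Suppose $\beta_-\ne0$ and $\gamma_->0$, and let $J\subset]0,b[$ be an interval. 1. If $\beta_-<0$ and the curve $\overline\Delta(x,y)=0$ lies above (resp. below) the curve $y=\Pi(x)$ for all $x\in J$, then $\Delta(x)>0$ and $\tilde I'(x)>0$ (resp. $\Delta(x)<0$ and $\tilde I'(x)<0$) for all $x\in J$. 2. If $\beta_->0$ and the curve $\overline\Delta(x,y)=0$ lies above (resp. below) the curve $y=\Pi(x)$ for all $x\in J$, then $\Delta(x)<0$ and $\tilde I'(x)<0$ (resp. $\Delta(x)>0$ and $\tilde I'(x)>0$) for all $x\in J$.
   Context: Real parameters $B,\alpha_+,\beta_+,\gamma_+,\delta_+,\beta_-,\gamma_-$ with $B>\delta_+>0$. $Z^-(x,y)=(-1+\beta_- y,\,-x+\gamma_- y)$, $X^{sl}(u)=\frac{1}{1+\delta_+}(B-\delta_++\alpha_+u)$, and $x^*=-(B-\delta_+)/\alpha_+$ when $\alpha_+\ne0$. Poincaré half-map $\Pi$: for $x>0$, $(\Pi(x),0)$ with $\Pi(x)<0$ is the first return to $\{y=0\}$ of the forward $Z^-$-orbit through $(x,0)$; $\Pi(0)=0$. $[0,b[$ is the largest interval of this form in the domain of $\Pi$ such that $X^{sl}>0$ on $[\Pi(x),x]$ for all $x\in[0,b[$. Define $\tilde I(x)=\int_{\Pi(x)}^x\frac{u\,du}{X^{sl}(u)}$ on $[0,b[$, $\overline\Delta(x,y)=\alpha_+\beta_-xy+\beta_-(B-\delta_+)(x+y)-\alpha_+-\gamma_-(B-\delta_+)$,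 and $\Delta(x)=\overline\Delta(x,\Pi(x))$. ''The curve $\overline\Delta=0$ lies above (below) $y=\Pi(x)$ for $x\in J$'' means: for each $x\in J$, every $y$ with $\overline\Delta(x,y)=0$ satisfies $y>\Pi(x)$ (resp. $y<\Pi(x)$). *)

From Stdlib Require Import Reals.
From Coquelicot Require Import Coquelicot.
Open Scope R_scope.

Definition Zm_solution (bm gm : R) (p q : R -> R) : Prop :=
  forall t : R, is_derive p t (-1 + bm * q t) /\ is_derive q t (- p t + gm * q t).

(* half_map bm gm x y : the forward Z^- orbit through (x,0) first returns to
   {y = 0} at the point (y,0), and y < 0.  I.e. Pi(x) = y. *)
Definition half_map (bm gm x y : R) : Prop :=
  y < 0 /\
  exists (p q : R -> R) (T : R),
    0 < T /\ Zm_solution bm gm p q /\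
    p 0 = x /\ q 0 = 0 /\ p T = y /\ q T = 0 /\
    (forall t, 0 < t < T -> q t <> 0).

Definition Xsl (B ap dp u : R) : R := (B - dp + ap * u) / (1 + dp).

Definition Delta_bar (B ap dp bm gm x y : R) : R :=
  ap * bm * x * y + bm * (B - dp) * (x + y) - ap - gm * (B - dp).

Definition I_tilde (B ap dp : R) (Pi : R -> R) (x : R) : R :=
  RInt (fun u => u / Xsl B ap dp u) (Pi x) x.

Definition is_interval (J : R -> Prop) : Prop :=
  forall a c z, J a -> J c -> a <= z <= c -> J z.

Definition curve_above (B ap dp bm gm : R) (Pi : R -> R) (J : R -> Prop) : Prop :=
  forall x, J x -> forall y, Delta_bar B ap dp bm gm x y = 0 -> y > Pi x.
Definition curve_below (B ap dp bm gm : R) (Pi : R -> R) (J : R -> Prop) : Prop :=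
  forall x, J x -> forall y, Delta_bar B ap dp bm gm x y = 0 -> y < Pi x.

From Stdlib Require Import Reals Lra Psatz.
From Coquelicot Require Import Coquelicot.
Open Scope R_scope.

(* Differences of Z^- orbits solve the linear system [Zlin_solution], so the orbit through
   [(x + h, 0)] is [(p + h u1, q + h u2)], where [(u1, u2)] starts at [(1, 0)].  The orbit
   crosses [y = 0] transversally at its return time [T], so the return time depends
   continuously on [h] and [Pi'(x) = u1 T - u2 T / Pi x].  By Liouville's formula, the
   determinant of the velocity and the variation, and that of the velocity and its derivative,
   both grow like [exp (gm t)]; evaluated on the axis they give
   [Pi'(x) = x N(Pi x) / (Pi x N(x))], where [N = axis_poly bm gm] is positive.  Leibniz's rule then
   yields [I'(x) = k Delta(x)] with [k > 0], and as [Delta_bar x y] is affine in [y] with a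
   slope of the sign of [bm], the position of its zero relative to [Pi x] fixes the sign of
   [Delta(x)]. *)

Lemma is_derive_eq (f : R -> R) (t l l' : R) : l = l' -> is_derive f t l -> is_derive f t l'.
Proof. now intros <-. Qed.

Lemma is_derive_const_R (c t : R) : is_derive (fun _ => c) t 0.
Proof. exact (is_derive_const c t). Qed.

Lemma is_derive_opp_R (f : R -> R) (t df : R) :
  is_derive f t df -> is_derive (fun s => - f s) t (- df).
Proof. exact (is_derive_opp f t df). Qed.

Lemma is_derive_plus_R (f g : R -> R) (t df dg : R) :
  is_derive f t df -> is_derive g t dg -> is_derive (fun s => f s + g s) t (df + dg).
Proof. exact (is_derive_plus f g t df dg). Qed.

Lemma is_derive_minus_R (f g : R -> R) (t df dg : R) :
  is_derive f t df -> is_derive g t dg -> is_derive (fun s => f s - g s) t (df - dg).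
Proof. exact (is_derive_minus f g t df dg). Qed.

Lemma is_derive_scal_R (f : R -> R) (k t df : R) :
  is_derive f t df -> is_derive (fun s => k * f s) t (k * df).
Proof. exact (is_derive_scal f t k df). Qed.

Lemma is_derive_mult_R (f g : R -> R) (t df dg : R) :
  is_derive f t df -> is_derive g t dg ->
  is_derive (fun s => f s * g s) t (df * g t + f t * dg).
Proof. intros Hf Hg; apply (is_derive_mult f g); auto; intros; apply Rmult_comm. Qed.

Lemma is_derive_continuity_pt (f : R -> R) t l : is_derive f t l -> continuity_pt f t.
Proof.
  intros H; apply continuity_pt_filterlim.
  apply (ex_derive_continuous (K := R_AbsRing) (V := R_NormedModule)); now exists l.
Qed.

Lemma is_derive_continuity (f df : R -> R) :
  (forall t, is_derive f t (df t)) -> continuity f.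
Proof. intros H t; exact (is_derive_continuity_pt f t (df t) (H t)). Qed.

Lemma MVT_is_derive (f df : R -> R) a b : (forall t, is_derive f t (df t)) -> a <= b ->
  exists c, a <= c <= b /\ f b - f a = df c * (b - a).
Proof.
  intros Hf Hab.
  destruct (MVT_gen f a b df) as [c [Hc E]].
  - intros; apply Hf.
  - intros t _; exact (is_derive_continuity f df Hf t).
  - rewrite Rmin_left, Rmax_right in Hc by lra; eauto.
Qed.

Lemma is_derive_pos_increasing (f df : R -> R) a b :
  (forall t, is_derive f t (df t)) -> (forall t, a <= t <= b -> 0 < df t) ->
  forall t, a < t <= b -> f a < f t.
Proof.
  intros Hf Hpos t Ht.
  destruct (MVT_is_derive f df a t Hf) as [c [Hc E]]; [lra|].
  specialize (Hpos c ltac:(lra)); nra.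
Qed.

Lemma is_derive_neg_decreasing (f df : R -> R) a b :
  (forall t, is_derive f t (df t)) -> (forall t, a <= t <= b -> df t < 0) ->
  forall t, a < t <= b -> f t < f a.
Proof.
  intros Hf Hneg t Ht.
  destruct (MVT_is_derive f df a t Hf) as [c [Hc E]]; [lra|].
  specialize (Hneg c ltac:(lra)); nra.
Qed.

Lemma exp_growth (f : R -> R) k :
  (forall t, is_derive f t (k * f t)) -> forall t, f t = f 0 * exp (k * t).
Proof.
  intros Hf t.
  set (g := fun s => f s * exp (- (k * s))).
  assert (Hg : forall s, is_derive g s 0).
  { intros s; eapply is_derive_eq; [|apply is_derive_mult_R; [apply Hf | auto_derive; auto]].
    simpl; ring. }
  destruct (MVT_gen g 0 t (fun _ => 0)) as [c [_ E]].
  - intros; apply Hg.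
  - intros s _; exact (is_derive_continuity_pt g s 0 (Hg s)).
  - unfold g in E; rewrite Rmult_0_r, Ropp_0, exp_0, Rmult_0_l in E.
    replace (f t) with (f t * exp (- (k * t)) * exp (k * t)) by
      (rewrite Rmult_assoc, <- exp_plus, Rplus_opp_l, exp_0; ring).
    rewrite (Rminus_diag_uniq _ _ E); ring.
Qed.

Lemma continuity_pt_near (f : R -> R) a eps : continuity_pt f a -> 0 < eps ->
  exists d, 0 < d /\ forall t, Rabs (t - a) < d -> Rabs (f t - f a) < eps.
Proof.
  intros Hf Heps.
  destruct (proj1 (continuity_pt_locally f a) Hf (mkposreal eps Heps)) as [d Hd].
  exists d; split; [apply cond_pos|]; intros t Ht; apply (Hd t), Ht.
Qed.

Lemma continuity_bounded (f : R -> R) a b : continuity f -> a <= b ->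
  exists M, 0 < M /\ forall t, a <= t <= b -> Rabs (f t) <= M.
Proof.
  intros Hf Hab.
  destruct (continuity_ab_maj (fun t => Rabs (f t)) a b) as [s [Hs _]]; [exact Hab| |].
  { intros t _; apply (continuity_pt_comp f Rabs); [apply Hf | apply Rcontinuity_abs]. }
  exists (Rabs (f s) + 1); split; [pose proof (Rabs_pos (f s)); lra|].
  intros t Ht; specialize (Hs t Ht); simpl in Hs; lra.
Qed.

Section LinearSystem.

Variables bm gm : R.

Definition Zlin_solution (u1 u2 : R -> R) : Prop :=
  forall t, is_derive u1 t (bm * u2 t) /\ is_derive u2 t (- u1 t + gm * u2 t).

Lemma Zlin_solution_zero u1 u2 : Zlin_solution u1 u2 -> u1 0 = 0 -> u2 0 = 0 ->
  forall t, 0 <= t -> u1 t = 0 /\ u2 t = 0.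
Proof.
  intros U U10 U20 t Ht.
  set (L := (bm - 1) ^ 2 + gm ^ 2 + 2).
  set (E := fun s => (u1 s ^ 2 + u2 s ^ 2) * exp (- (L * s))).
  set (dE := fun s => (2 * (bm - 1) * u1 s * u2 s + 2 * gm * u2 s ^ 2
                       - L * (u1 s ^ 2 + u2 s ^ 2)) * exp (- (L * s))).
  assert (HE : forall s, is_derive E s (dE s)).
  { intros s; destruct (U s) as [D1 D2].
    eapply is_derive_eq;
      [|apply is_derive_mult_R;
        [apply is_derive_plus_R; apply (is_derive_pow _ 2); eassumption | auto_derive; auto]].
    unfold dE; simpl; ring. }
  assert (dE_nonpos : forall s, dE s <= 0).
  { intros s; unfold dE; apply Rmult_le_0_r; [|left; apply exp_pos].
    assert (0 <= (u1 s - (bm - 1) * u2 s) ^ 2) by apply pow2_ge_0.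
    assert (0 <= ((gm - 1) * u2 s) ^ 2) by apply pow2_ge_0.
    assert (0 <= ((bm - 1) ^ 2 + gm ^ 2 + 1) * u1 s ^ 2)
      by (apply Rmult_le_pos; [pose proof (pow2_ge_0 (bm - 1)); pose proof (pow2_ge_0 gm); lra
                               | apply pow2_ge_0]).
    unfold L; nra. }
  destruct (MVT_is_derive E dE 0 t HE Ht) as [c [_ Ec]].
  assert (Et : E t <= 0) by (specialize (dE_nonpos c); unfold E at 2 in Ec;
                             rewrite U10, U20 in Ec; simpl in Ec; nra).
  unfold E in Et; pose proof (exp_pos (- (L * t))).
  assert (u1 t ^ 2 + u2 t ^ 2 <= 0) by nra.
  pose proof (pow2_ge_0 (u1 t)); pose proof (pow2_ge_0 (u2 t)).
  split; nra.
Qed.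

Lemma Zlin_solution_add u1 u2 v1 v2 : Zlin_solution u1 u2 -> Zlin_solution v1 v2 ->
  Zlin_solution (fun t => u1 t + v1 t) (fun t => u2 t + v2 t).
Proof.
  intros U V t; destruct (U t) as [U1 U2], (V t) as [V1 V2]; split;
    (eapply is_derive_eq; [|apply is_derive_plus_R; eassumption]); ring.
Qed.

Lemma Zlin_solution_scal k u1 u2 : Zlin_solution u1 u2 ->
  Zlin_solution (fun t => k * u1 t) (fun t => k * u2 t).
Proof.
  intros U t; destruct (U t) as [U1 U2]; split;
    (eapply is_derive_eq; [|apply is_derive_scal_R; eassumption]); ring.
Qed.

Lemma Zm_solution_sub p q p' q' : Zm_solution bm gm p q -> Zm_solution bm gm p' q' ->
  Zlin_solution (fun t => p' t - p t) (fun t => q' t - q t).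
Proof.
  intros Z Z' t; destruct (Z t) as [P Q], (Z' t) as [P' Q']; split;
    (eapply is_derive_eq; [|apply is_derive_minus_R; eassumption]); ring.
Qed.

Lemma Zm_solution_shift p q p' q' u1 u2 h :
  Zm_solution bm gm p q -> Zm_solution bm gm p' q' -> Zlin_solution u1 u2 ->
  u1 0 = 1 -> u2 0 = 0 -> p' 0 = p 0 + h -> q' 0 = q 0 ->
  forall t, 0 <= t -> p' t = p t + h * u1 t /\ q' t = q t + h * u2 t.
Proof.
  intros Z Z' U U10 U20 P0 Q0 t Ht.
  assert (D : Zlin_solution (fun s => (p' s - p s) + (- h) * u1 s)
                            (fun s => (q' s - q s) + (- h) * u2 s))
    by (apply Zlin_solution_add; [apply Zm_solution_sub | apply Zlin_solution_scal]; assumption).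
  destruct (Zlin_solution_zero _ _ D) with (t := t) as [E1 E2]; cbv beta;
    [rewrite U10; lra | rewrite U20; lra | lra | lra].
Qed.

Lemma Zlin_unit_solution p q p' q' :
  Zm_solution bm gm p q -> Zm_solution bm gm p' q' -> p' 0 <> p 0 -> q' 0 = q 0 ->
  exists u1 u2, Zlin_solution u1 u2 /\ u1 0 = 1 /\ u2 0 = 0.
Proof.
  intros Z Z' Hp Hq; set (k := / (p' 0 - p 0)).
  exists (fun t => k * (p' t - p t)), (fun t => k * (q' t - q t)); split; [|split].
  - apply Zlin_solution_scal, Zm_solution_sub; assumption.
  - unfold k; field; lra.
  - rewrite Hq; ring.
Qed.

Lemma Zm_velocity p q : Zm_solution bm gm p q ->
  Zlin_solution (fun t => -1 + bm * q t) (fun t => - p t + gm * q t).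
Proof.
  intros Z t; destruct (Z t) as [P Q]; split.
  - eapply is_derive_eq;
      [|apply is_derive_plus_R; [apply is_derive_const_R | apply is_derive_scal_R, Q]]; ring.
  - eapply is_derive_eq;
      [|apply is_derive_plus_R; [apply is_derive_opp_R, P | apply is_derive_scal_R, Q]]; ring.
Qed.

Lemma Zlin_solution_image u1 u2 : Zlin_solution u1 u2 ->
  Zlin_solution (fun t => bm * u2 t) (fun t => - u1 t + gm * u2 t).
Proof.
  intros U t; destruct (U t) as [U1 U2]; split.
  - eapply is_derive_eq; [|apply is_derive_scal_R, U2]; ring.
  - eapply is_derive_eq;
      [|apply is_derive_plus_R; [apply is_derive_opp_R, U1 | apply is_derive_scal_R, U2]]; ring.
Qed.

(* Liouville's formula: the trace of the system matrix is [gm]. *)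
Lemma Zlin_det_growth u1 u2 v1 v2 : Zlin_solution u1 u2 -> Zlin_solution v1 v2 ->
  forall t, u1 t * v2 t - u2 t * v1 t = (u1 0 * v2 0 - u2 0 * v1 0) * exp (gm * t).
Proof.
  intros U V.
  apply (exp_growth (fun t => u1 t * v2 t - u2 t * v1 t)); intros t.
  destruct (U t) as [U1 U2], (V t) as [V1 V2].
  eapply is_derive_eq; [|apply is_derive_minus_R; apply is_derive_mult_R; eassumption]; ring.
Qed.

End LinearSystem.

Lemma first_zero_between (Q : R -> R) s1 s2 T : continuity Q -> 0 < s1 < s2 ->
  (forall t, 0 < t <= s1 -> Q t < 0) -> 0 < Q s2 ->
  0 < T -> Q T = 0 -> (forall t, 0 < t < T -> Q t <> 0) -> s1 < T <= s2.
Proof.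
  intros CQ Hs Hneg Hpos HT QT Hfirst.
  assert (s1 < T) by (destruct (Rlt_or_le s1 T); [lra|]; specialize (Hneg T ltac:(lra)); lra).
  split; [assumption|].
  destruct (IVT Q s1 s2 CQ) as [z [Hz Qz]]; [lra | apply Hneg; lra | exact Hpos |].
  destruct (Rle_or_lt T s2) as [|Hlt]; [assumption|].
  destruct (Rle_lt_or_eq_dec s1 z (proj1 Hz)) as [|<-].
  - exfalso; apply (Hfirst z); [lra | exact Qz].
  - specialize (Hneg s1 ltac:(lra)); lra.
Qed.

Section FirstZero.

Variables q dq v dv : R -> R.
Hypothesis q_deriv : forall t, is_derive q t (dq t).
Hypothesis dq_cont : continuity dq.
Hypothesis v_deriv : forall t, is_derive v t (dv t).
Hypothesis dv_cont : continuity dv.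
Hypothesis q0 : q 0 = 0.
Hypothesis dq0_neg : dq 0 < 0.
Hypothesis v0 : v 0 = 0.

Lemma perturbed_neg_near_zero : exists a delta, 0 < a /\ 0 < delta /\
  forall h, Rabs h < delta -> forall t, 0 < t <= a -> q t + h * v t < 0.
Proof.
  set (c := - dq 0 / 2).
  destruct (continuity_pt_near dq 0 c (dq_cont 0)) as [d [Hd Near0]]; [unfold c; lra|].
  destruct (continuity_bounded dv 0 (d / 2) dv_cont) as [M [HM Bd]]; [lra|].
  exists (d / 2), (c / M); split; [lra|]; split; [apply Rdiv_lt_0_compat; unfold c; lra|].
  intros h Hh t Ht; apply Rlt_div_r in Hh; [|lra].
  replace 0 with (q 0 + h * v 0) by (rewrite q0, v0; ring).
  apply (is_derive_neg_decreasing (fun s => q s + h * v s) (fun s => dq s + h * dv s) 0 (d / 2));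
    [| intros s Hs | lra].
  - intros s; apply is_derive_plus_R, is_derive_scal_R; [apply q_deriv | apply v_deriv].
  - specialize (Near0 s ltac:(rewrite Rminus_0_r, Rabs_pos_eq; lra)); apply Rabs_def2 in Near0.
    specialize (Bd s Hs); pose proof (Rabs_pos h); pose proof (Rabs_pos (dv s)).
    assert (Hsmall : Rabs (h * dv s) < c) by (rewrite Rabs_mult; nra).
    apply Rabs_def2 in Hsmall; unfold c in *; lra.
Qed.

Lemma neg_before_first_zero T :
  (forall t, 0 < t < T -> q t <> 0) -> forall t, 0 < t < T -> q t < 0.
Proof.
  intros Hfirst t Ht.
  destruct perturbed_neg_near_zero as [a [delta [Ha [Hdelta Hstart]]]].
  assert (q_start : forall s, 0 < s <= a -> q s < 0).
  { intros s Hs; specialize (Hstart 0 ltac:(rewrite Rabs_R0; lra) s Hs); lra. }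
  set (s := Rmin a t).
  assert (Hs : 0 < s <= a /\ s <= t)
    by (unfold s; split; [split; [apply Rmin_pos|apply Rmin_l]|apply Rmin_r]; lra).
  specialize (q_start s (proj1 Hs)).
  destruct (Rlt_or_le (q t) 0) as [|Hge]; [assumption|exfalso].
  destruct (IVT_gen_consistent q s t 0) as [z [Hz Qz]].
  - intros r; apply continuity_pt_filterlim, (is_derive_continuity q dq q_deriv).
  - rewrite Rmin_left, Rmax_right by lra; lra.
  - rewrite Rmin_left, Rmax_right in Hz by lra.
    apply (Hfirst z); [lra | exact Qz].
Qed.

Lemma pos_right_after_zero T : q T = 0 -> 0 < dq T ->
  forall eps, 0 < eps -> exists s, 0 < s < eps /\ 0 < q (T + s).
Proof.
  intros QT HdqT eps Heps.
  destruct (continuity_pt_near dq T (dq T) (dq_cont T)) as [d [Hd NearT]]; [lra|].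
  set (s := Rmin d eps / 2).
  assert (Hs : 0 < s < d /\ s < eps)
    by (unfold s; pose proof (Rmin_l d eps); pose proof (Rmin_r d eps);
        pose proof (Rmin_pos d eps Hd Heps); lra).
  exists s; split; [lra|].
  rewrite <- QT; apply (is_derive_pos_increasing q dq T (T + s) q_deriv); [|lra].
  intros t Ht; specialize (NearT t ltac:(rewrite Rabs_pos_eq; lra)).
  apply Rabs_def2 in NearT; lra.
Qed.

Lemma first_zero_continuous T : 0 < T -> q T = 0 -> 0 < dq T ->
  (forall t, 0 < t < T -> q t <> 0) ->
  forall eta, 0 < eta -> exists delta, 0 < delta /\
    forall h T', Rabs h < delta -> 0 < T' -> q T' + h * v T' = 0 ->
      (forall t, 0 < t < T' -> q t + h * v t <> 0) -> Rabs (T' - T) < eta.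
Proof.
  intros HT QT HdqT Hfirst eta Heta.
  destruct perturbed_neg_near_zero as [a [delta0 [Ha [Hdelta0 Q_start]]]].
  destruct (pos_right_after_zero T QT HdqT (Rmin eta (Rmin (T / 2) 1))) as [a1 [Ha1 q_end]].
  { repeat apply Rmin_pos; lra. }
  assert (a1 < eta /\ a1 < T / 2 /\ a1 < 1).
  { pose proof (Rmin_l eta (Rmin (T / 2) 1)); pose proof (Rmin_r eta (Rmin (T / 2) 1)).
    pose proof (Rmin_l (T / 2) 1); pose proof (Rmin_r (T / 2) 1); lra. }
  set (a0 := Rmin a (T / 2)).
  assert (Ha0 : 0 < a0 <= a /\ a0 <= T / 2)
    by (unfold a0; split; [split; [apply Rmin_pos|apply Rmin_l]|apply Rmin_r]; lra).
  destruct (continuity_ab_maj q a0 (T - a1)) as [tm [q_max Htm]];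
    [lra | intros t _; exact (is_derive_continuity q dq q_deriv t) |].
  assert (q_max_neg : q tm < 0) by (apply (neg_before_first_zero T Hfirst); lra).
  destruct (continuity_bounded v 0 (T + 1) (is_derive_continuity v dv v_deriv)) as [M [HM Bv]];
    [lra|].
  set (e := Rmin (- q tm) (q (T + a1))).
  assert (He : 0 < e /\ e <= - q tm /\ e <= q (T + a1))
    by (unfold e; split; [apply Rmin_pos|split; [apply Rmin_l|apply Rmin_r]]; lra).
  exists (Rmin delta0 (e / M)); split; [apply Rmin_pos; [lra | apply Rdiv_lt_0_compat; lra]|].
  intros h T' Hh HT' QT' Hfirst'.
  assert (Hh0 : Rabs h < delta0) by (eapply Rlt_le_trans; [exact Hh | apply Rmin_l]).
  assert (Hh1 : Rabs h * M < e)
    by (apply Rlt_div_r; [lra|]; eapply Rlt_le_trans; [exact Hh | apply Rmin_r]).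
  assert (small : forall t, 0 <= t <= T + 1 -> Rabs (h * v t) < e).
  { intros t Ht; rewrite Rabs_mult; specialize (Bv t Ht).
    pose proof (Rabs_pos h); pose proof (Rabs_pos (v t)); nra. }
  assert (Q_neg : forall t, 0 < t <= T - a1 -> q t + h * v t < 0).
  { intros t Ht; destruct (Rle_or_lt t a0); [apply Q_start; lra|].
    specialize (small t ltac:(lra)); apply Rabs_def2 in small.
    specialize (q_max t ltac:(lra)); lra. }
  assert (Q_end : 0 < q (T + a1) + h * v (T + a1))
    by (specialize (small (T + a1) ltac:(lra)); apply Rabs_def2 in small; lra).
  destruct (first_zero_between (fun t => q t + h * v t) (T - a1) (T + a1) T');
    try lra; try assumption.
  - apply continuity_plus; [exact (is_derive_continuity q dq q_deriv)|].
    apply (continuity_scal v h), (is_derive_continuity v dv v_deriv).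
  - apply Rabs_def1; lra.
Qed.

End FirstZero.

Definition slope (f : R -> R) (T l s : R) : R :=
  if Req_EM_T s T then l else (f s - f T) / (s - T).

Lemma slope_spec (f : R -> R) T l s : f s - f T = slope f T l s * (s - T).
Proof.
  unfold slope; destruct (Req_EM_T s T) as [->|Hne]; [ring|].
  field; lra.
Qed.

Lemma slope_at (f : R -> R) T l : slope f T l T = l.
Proof. unfold slope; destruct (Req_EM_T T T); congruence. Qed.

Lemma slope_continuity_pt (f : R -> R) T l : is_derive f T l -> continuity_pt (slope f T l) T.
Proof.
  intros Hf; apply is_derive_Reals in Hf.
  intros eps Heps; destruct (Hf eps Heps) as [d Hd].
  exists d; split; [apply cond_pos|].
  intros s [[_ Hs] Hds]; simpl in *; unfold R_dist in *; rewrite slope_at.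
  unfold slope; destruct (Req_EM_T s T) as [|Hne]; [congruence|].
  specialize (Hd (s - T)); replace (T + (s - T)) with s in Hd by ring.
  apply Hd; lra.
Qed.

Lemma slope_quotient (p q u1 u2 : R -> R) T T' h lp lq :
  h <> 0 -> q T = 0 -> slope q T lq T' <> 0 -> q T' + h * u2 T' = 0 ->
  (p T' + h * u1 T' - p T) / h = u1 T' - slope p T lp T' * u2 T' / slope q T lq T'.
Proof.
  intros Hh QT Hs QT'.
  pose proof (slope_spec p T lp T') as DP; pose proof (slope_spec q T lq T') as DQ.
  replace (T' - T) with (- h * u2 T' / slope q T lq T') in DP
    by (rewrite QT in DQ; field_simplify_eq; lra).
  replace (p T') with (p T + slope p T lp T' * (- h * u2 T' / slope q T lq T')) by lra.
  field; split; assumption.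
Qed.

Lemma is_derive_along (f G : R -> R) x T : continuity_pt G T ->
  (forall eta, 0 < eta -> exists delta, 0 < delta /\ forall h, h <> 0 -> Rabs h < delta ->
     exists s, Rabs (s - T) < eta /\ (f (x + h) - f x) / h = G s) ->
  is_derive f x (G T).
Proof.
  intros CG Hf; apply is_derive_Reals; intros eps Heps.
  destruct (continuity_pt_near G T eps CG Heps) as [eta [Heta Near]].
  destruct (Hf eta Heta) as [delta [Hdelta Hs]].
  exists (mkposreal delta Hdelta); intros h Hh0 Hh.
  destruct (Hs h Hh0 Hh) as [s [Hs' ->]]; exact (Near s Hs').
Qed.

Definition axis_poly (bm gm u : R) : R := bm * u * u - gm * u + 1.

(* The determinant of [v] and [A v], where [A] is the matrix of [Zlin_solution]. *)
Definition Zlin_form (bm gm v1 v2 : R) : R := v1 * (- v1 + gm * v2) - v2 * (bm * v2).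

Section ReturnOrbit.

Variables bm gm x T : R.
Variables p q u1 u2 : R -> R.
Hypothesis orbit : Zm_solution bm gm p q.
Hypothesis p0 : p 0 = x.
Hypothesis q0 : q 0 = 0.
Hypothesis x_pos : 0 < x.
Hypothesis T_pos : 0 < T.
Hypothesis qT : q T = 0.
Hypothesis pT_neg : p T < 0.
Hypothesis variation : Zlin_solution bm gm u1 u2.
Hypothesis u10 : u1 0 = 1.
Hypothesis u20 : u2 0 = 0.

Lemma velocity_variation_det t :
  (-1 + bm * q t) * u2 t - (- p t + gm * q t) * u1 t = x * exp (gm * t).
Proof.
  rewrite (Zlin_det_growth bm gm _ _ _ _ (Zm_velocity bm gm p q orbit) variation t).
  rewrite p0, q0, u10, u20; ring.
Qed.

Lemma velocity_form_growth t :
  Zlin_form bm gm (-1 + bm * q t) (- p t + gm * q t) = - axis_poly bm gm x * exp (gm * t).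
Proof.
  pose proof (Zm_velocity bm gm p q orbit) as V.
  unfold Zlin_form; rewrite (Zlin_det_growth bm gm _ _ _ _ V (Zlin_solution_image bm gm _ _ V) t).
  rewrite p0, q0; unfold axis_poly; ring.
Qed.

Lemma return_variation : p T * u1 T - u2 T = x * exp (gm * T).
Proof. rewrite <- velocity_variation_det, qT; ring. Qed.

Lemma axis_poly_return : axis_poly bm gm (p T) = axis_poly bm gm x * exp (gm * T).
Proof.
  pose proof (velocity_form_growth T) as K; rewrite qT in K; unfold Zlin_form, axis_poly in *.
  lra.
Qed.

Lemma axis_poly_pos_of_bm_pos : 0 < bm -> 0 < axis_poly bm gm x.
Proof.
  intros Hbm; destruct (Rlt_or_le 0 (axis_poly bm gm x)) as [|Hle]; [assumption|exfalso].
  pose proof axis_poly_return as Ny; set (y := p T) in *.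
  pose proof (exp_pos (gm * T)).
  assert (axis_poly bm gm y <= 0) by (rewrite Ny; nra).
  assert (0 < (x - y) * (1 - bm * x * y))
    by (apply Rmult_lt_0_compat;
        [lra | assert (0 < bm * (x * - y)) by (apply Rmult_lt_0_compat; nra); nra]).
  assert (x * axis_poly bm gm y - y * axis_poly bm gm x = (x - y) * (1 - bm * x * y))
    by (unfold axis_poly; ring).
  nra.
Qed.

Hypothesis gm_pos : 0 < gm.

(* If [axis_poly x <= 0], [Zlin_form] is nonnegative along the velocity [(v1, v2)] of the
   orbit.  On that cone [S] vanishes only at the origin, yet [S] changes sign on [[0, T]],
   while the velocity never vanishes: its determinant with the variation is [x exp (gm t)]. *)
Lemma axis_poly_pos_of_bm_neg : bm < 0 -> 0 < axis_poly bm gm x.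
Proof.
  intros Hbm; destruct (Rlt_or_le 0 (axis_poly bm gm x)) as [|Hle]; [assumption|exfalso].
  set (v1 := fun t => -1 + bm * q t); set (v2 := fun t => - p t + gm * q t).
  set (S := fun t => 2 * bm * v2 t - gm * v1 t).
  assert (HK : forall t, - 4 * bm * Zlin_form bm gm (v1 t) (v2 t)
                         = S t ^ 2 - (gm ^ 2 - 4 * bm) * v1 t ^ 2)
    by (intros t; unfold S, Zlin_form; ring).
  assert (Kpos : forall t, 0 <= - 4 * bm * Zlin_form bm gm (v1 t) (v2 t)).
  { intros t; unfold v1, v2; rewrite velocity_form_growth.
    pose proof (exp_pos (gm * t)); assert (0 <= - axis_poly bm gm x * exp (gm * t)) by nra; nra. }
  assert (S0 : 0 < S 0) by (unfold S, v1, v2; rewrite p0, q0; nra).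
  assert (ST : S T < 0).
  { specialize (Kpos T); rewrite HK in Kpos; unfold S, v1, v2 in *; rewrite qT in *.
    assert (0 < bm * p T) by nra; nra. }
  assert (CS : continuity (fun t => - S t)).
  { pose proof (Zm_velocity bm gm p q orbit) as V.
    apply (is_derive_continuity _ (fun t => - (2 * bm * (- v1 t + gm * v2 t) - gm * (bm * v2 t)))).
    intros t; destruct (V t) as [V1 V2].
    apply is_derive_opp_R, is_derive_minus_R; apply is_derive_scal_R; assumption. }
  destruct (IVT (fun t => - S t) 0 T CS) as [tau [_ Stau]]; [lra | lra | lra |].
  specialize (Kpos tau); rewrite HK in Kpos; replace (S tau) with 0 in Kpos by lra.
  assert (v1_0 : v1 tau = 0).
  { assert (0 < gm ^ 2 - 4 * bm) by nra; assert (v1 tau * v1 tau <= 0) by nra; nra. }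
  assert (v2_0 : v2 tau = 0).
  { unfold S in Stau; rewrite v1_0 in Stau; apply (Rmult_eq_reg_l (2 * bm)); lra. }
  pose proof (velocity_variation_det tau) as W; fold (v1 tau) (v2 tau) in W.
  rewrite v1_0, v2_0 in W; pose proof (exp_pos (gm * tau)); nra.
Qed.

Hypothesis bm_neq0 : bm <> 0.

Lemma axis_poly_pos : 0 < axis_poly bm gm x.
Proof.
  destruct (Rlt_or_le 0 bm); [apply axis_poly_pos_of_bm_pos | apply axis_poly_pos_of_bm_neg]; lra.
Qed.

Variable b : R.
Variable Pi : R -> R.
Hypothesis Pi_half_map : forall x', 0 < x' < b -> half_map bm gm x' (Pi x').
Hypothesis x_lt_b : x < b.
Hypothesis pT_Pi : p T = Pi x.
Hypothesis first_return : forall t, 0 < t < T -> q t <> 0.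

Lemma perturbed_return eta : 0 < eta -> exists delta, 0 < delta /\ forall h, Rabs h < delta ->
  exists T', Rabs (T' - T) < eta /\ Pi (x + h) = p T' + h * u1 T' /\ q T' + h * u2 T' = 0.
Proof.
  intros Heta.
  pose proof (Zm_velocity bm gm p q orbit) as V.
  pose proof (Zlin_solution_image bm gm u1 u2 variation) as AU.
  destruct (first_zero_continuous q (fun t => - p t + gm * q t) u2 (fun t => - u1 t + gm * u2 t))
    with (T := T) (eta := eta) as [delta [Hdelta Hreturn]];
    [ intros t; apply orbit
    | apply (is_derive_continuity _ _ (fun t => proj2 (V t)))
    | intros t; apply variation
    | apply (is_derive_continuity _ _ (fun t => proj2 (AU t)))
    | assumption | rewrite p0, q0; lra | assumption | assumption | assumption
    | rewrite qT; lra | assumption | assumption | ].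
  exists (Rmin delta (Rmin x (b - x))); split; [repeat apply Rmin_pos; lra|].
  intros h Hh.
  pose proof (Rmin_l delta (Rmin x (b - x))); pose proof (Rmin_r delta (Rmin x (b - x))).
  pose proof (Rmin_l x (b - x)); pose proof (Rmin_r x (b - x)).
  pose proof (Rle_abs h); pose proof (Rle_abs (- h)); rewrite Rabs_Ropp in *.
  destruct (Pi_half_map (x + h) ltac:(lra))
    as [_ [p' [q' [T' [HT' [Z' [P0' [Q0' [PT' [QT' Hfirst']]]]]]]]]].
  pose proof (Zm_solution_shift bm gm p q p' q' u1 u2 h orbit Z' variation u10 u20
                ltac:(rewrite P0', p0; ring) ltac:(rewrite Q0', q0; ring)) as Shift.
  exists T'; split; [|split].
  - apply (Hreturn h T'); [lra | assumption | |].
    + rewrite <- (proj2 (Shift T' ltac:(lra))); exact QT'.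
    + intros t Ht; rewrite <- (proj2 (Shift t ltac:(lra))); apply Hfirst'; exact Ht.
  - rewrite <- PT'; apply (Shift T'); lra.
  - rewrite <- (proj2 (Shift T' ltac:(lra))); exact QT'.
Qed.

Lemma Pi_is_derive_variation : is_derive Pi x (u1 T - u2 T / Pi x).
Proof.
  set (Sp := slope p T (-1 + bm * q T)); set (Sq := slope q T (- p T + gm * q T)).
  assert (SqT : Sq T = - Pi x) by (unfold Sq; rewrite slope_at, qT, pT_Pi; ring).
  assert (CSq : continuity_pt Sq T) by (apply slope_continuity_pt, orbit).
  (* [G T'] is the difference quotient of [Pi] when the perturbed orbit returns at [T']. *)
  set (G := fun s => u1 s - Sp s * u2 s / Sq s).
  replace (u1 T - u2 T / Pi x) with (G T)
    by (unfold G, Sp; rewrite slope_at, SqT, qT; field; lra).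
  apply is_derive_along.
  { unfold G; apply continuity_pt_minus;
      [exact (is_derive_continuity_pt _ _ _ (proj1 (variation T)))|].
    apply continuity_pt_div; [apply continuity_pt_mult | exact CSq | cbv beta; rewrite SqT; lra].
    - apply slope_continuity_pt, orbit.
    - exact (is_derive_continuity_pt _ _ _ (proj2 (variation T))). }
  intros eta Heta.
  destruct (continuity_pt_near Sq T (- Pi x) CSq) as [e [He NearT]]; [lra|].
  destruct (perturbed_return (Rmin eta e)) as [delta [Hdelta Hret]]; [apply Rmin_pos; lra|].
  exists delta; split; [assumption|]; intros h Hh0 Hh.
  destruct (Hret h Hh) as [T' [HT' [PiT' QT']]].
  pose proof (Rmin_l eta e); pose proof (Rmin_r eta e).
  exists T'; split; [lra|].
  specialize (NearT T' ltac:(lra)); apply Rabs_def2 in NearT.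
  assert (Sq T' <> 0) by lra.
  rewrite PiT', <- pT_Pi; apply slope_quotient; assumption.
Qed.

Lemma Pi_is_derive : is_derive Pi x (x * axis_poly bm gm (Pi x) / (Pi x * axis_poly bm gm x)).
Proof.
  eapply is_derive_eq; [|exact Pi_is_derive_variation].
  pose proof axis_poly_pos.
  rewrite <- pT_Pi, axis_poly_return.
  replace (x * (axis_poly bm gm x * exp (gm * T)))
    with ((p T * u1 T - u2 T) * axis_poly bm gm x) by (rewrite return_variation; ring).
  field; lra.
Qed.

End ReturnOrbit.

Section HalfMap.

Variables bm gm b : R.
Variable Pi : R -> R.
Hypothesis Pi_half_map : forall x, 0 < x < b -> half_map bm gm x (Pi x).

Lemma half_map_variation x : 0 < x < b ->
  exists u1 u2, Zlin_solution bm gm u1 u2 /\ u1 0 = 1 /\ u2 0 = 0.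
Proof.
  intros Hx.
  destruct (Pi_half_map x Hx) as [_ [p [q [T [_ [Z [P0 [Q0 _]]]]]]]].
  destruct (Pi_half_map (x / 2) ltac:(lra)) as [_ [p' [q' [T' [_ [Z' [P0' [Q0' _]]]]]]]].
  apply (Zlin_unit_solution bm gm p q p' q' Z Z'); lra.
Qed.

Hypothesis gm_pos : 0 < gm.
Hypothesis bm_neq0 : bm <> 0.

Lemma half_map_axis_poly_pos x : 0 < x < b -> 0 < axis_poly bm gm x.
Proof.
  intros Hx; destruct (half_map_variation x Hx) as [u1 [u2 [U [U10 U20]]]].
  destruct (Pi_half_map x Hx) as [Hy [p [q [T [HT [Z [P0 [Q0 [PT [QT _]]]]]]]]]].
  apply (axis_poly_pos bm gm x T p q u1 u2); (assumption || lra).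
Qed.

Lemma half_map_is_derive x : 0 < x < b ->
  is_derive Pi x (x * axis_poly bm gm (Pi x) / (Pi x * axis_poly bm gm x)).
Proof.
  intros Hx; destruct (half_map_variation x Hx) as [u1 [u2 [U [U10 U20]]]].
  destruct (Pi_half_map x Hx) as [Hy [p [q [T [HT [Z [P0 [Q0 [PT [QT Hfirst]]]]]]]]]].
  apply (Pi_is_derive bm gm x T p q u1 u2) with (b := b); (assumption || lra).
Qed.

End HalfMap.

Lemma is_derive_RInt_bounds (f lo hi : R -> R) x dlo dhi r : 0 < r -> lo x <= hi x ->
  (forall z, lo x - r < z < hi x + r -> continuous f z) ->
  is_derive lo x dlo -> is_derive hi x dhi ->
  is_derive (fun s => RInt f (lo s) (hi s)) x (dhi * f (hi x) - dlo * f (lo x)).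
Proof.
  intros Hr Hle Cf Hlo Hhi.
  eapply is_derive_eq;
    [|apply (is_derive_RInt_bound_comp f (fun a c => RInt f a c) lo hi dlo dhi x)];
    [reflexivity | | apply Cf; lra | apply Cf; lra | exact Hlo | exact Hhi].
  exists (mkposreal r Hr); intros [u v] [Hu Hv]; simpl in Hu, Hv |- *.
  change (Rabs (u - lo x) < r) in Hu; change (Rabs (v - hi x) < r) in Hv.
  apply Rabs_def2 in Hu; apply Rabs_def2 in Hv.
  apply (RInt_correct (V := R_CompleteNormedModule)).
  apply (ex_RInt_continuous (V := R_CompleteNormedModule)); intros z Hz; apply Cf.
  assert (Rmin u v > lo x - r) by (apply Rmin_Rgt_r; lra).
  assert (Rmax u v < hi x + r) by (apply Rmax_lub_lt; lra).
  lra.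
Qed.

Lemma affine_pos_nbhd (c k l r : R) : l <= r -> 0 < c + k * l -> 0 < c + k * r ->
  exists rho, 0 < rho /\ forall z, l - rho < z < r + rho -> 0 < c + k * z.
Proof.
  intros Hlr Hl Hr.
  set (m := Rmin (c + k * l) (c + k * r)).
  assert (Hm : 0 < m /\ m <= c + k * l /\ m <= c + k * r)
    by (unfold m; split; [apply Rmin_pos|split; [apply Rmin_l|apply Rmin_r]]; lra).
  pose proof (Rabs_pos k).
  set (rho := m / (Rabs k + 1)).
  assert (Hk : Rabs k * rho < m).
  { apply (Rmult_lt_reg_r (Rabs k + 1)); [lra|].
    replace (Rabs k * rho * (Rabs k + 1)) with (Rabs k * m) by (unfold rho; field; lra).
    nra. }
  exists rho; split; [apply Rdiv_lt_0_compat; lra|].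
  intros z Hz; destruct (Rle_or_lt 0 k).
  - rewrite Rabs_pos_eq in Hk by lra.
    assert (0 <= k * (z - (l - rho))) by (apply Rmult_le_pos; lra); nra.
  - rewrite Rabs_left in Hk by lra.
    assert (0 <= - k * (r + rho - z)) by (apply Rmult_le_pos; lra); nra.
Qed.

Lemma Xsl_affine B ap dp u : 0 < 1 + dp ->
  Xsl B ap dp u = (B - dp) / (1 + dp) + ap / (1 + dp) * u.
Proof. intros Hdp; unfold Xsl; field; lra. Qed.

Lemma Xsl_pos_numerator B ap dp u : 0 < 1 + dp -> 0 < Xsl B ap dp u -> 0 < B - dp + ap * u.
Proof.
  intros Hdp HX.
  replace (B - dp + ap * u) with (Xsl B ap dp u * (1 + dp)) by (unfold Xsl; field; lra).
  nra.
Qed.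

Lemma I_tilde_is_derive B ap dp (Pi : R -> R) x dPi : 0 < 1 + dp -> Pi x <= x ->
  0 < Xsl B ap dp (Pi x) -> 0 < Xsl B ap dp x -> is_derive Pi x dPi ->
  is_derive (I_tilde B ap dp Pi) x (x / Xsl B ap dp x - dPi * (Pi x / Xsl B ap dp (Pi x))).
Proof.
  intros Hdp Hle Hy Hx HPi.
  rewrite (Xsl_affine B ap dp _ Hdp) in Hy; rewrite (Xsl_affine B ap dp _ Hdp) in Hx.
  destruct (affine_pos_nbhd _ _ _ _ Hle Hy Hx) as [rho [Hrho Pos]].
  eapply is_derive_eq;
    [|apply (is_derive_RInt_bounds (fun u => u / Xsl B ap dp u) Pi (fun s => s) x dPi 1 rho);
      [exact Hrho | exact Hle | | exact HPi | exact (is_derive_id x)]].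
  - simpl; ring.
  - intros z Hz; specialize (Pos z Hz); rewrite <- Xsl_affine in Pos by lra.
    apply continuity_pt_filterlim, continuity_pt_div; [apply continuity_pt_id | | lra].
    unfold Xsl; apply continuity_pt_div;
      [| apply continuity_pt_const; intros ? ?; reflexivity | lra].
    apply continuity_pt_plus; [apply continuity_pt_const; intros ? ?; reflexivity|].
    apply continuity_pt_scal, continuity_pt_id.
Qed.

Lemma axis_poly_Xsl_cross B ap dp bm gm x y : 0 < 1 + dp ->
  axis_poly bm gm x * Xsl B ap dp y - axis_poly bm gm y * Xsl B ap dp x
  = (x - y) * Delta_bar B ap dp bm gm x y / (1 + dp).
Proof. intros Hdp; unfold axis_poly, Xsl, Delta_bar; field; lra. Qed.

Lemma I_tilde_is_derive_Delta B ap dp bm gm b (Pi : R -> R) x :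
  dp > 0 -> gm > 0 -> bm <> 0 ->
  (forall x, 0 < x < b -> half_map bm gm x (Pi x)) ->
  (forall x, 0 <= x < b -> forall u, Pi x <= u <= x -> 0 < Xsl B ap dp u) ->
  0 < x < b ->
  exists k, 0 < k /\ is_derive (I_tilde B ap dp Pi) x (k * Delta_bar B ap dp bm gm x (Pi x)).
Proof.
  intros Hdp Hgm Hbm HPi HX Hx.
  pose proof (proj1 (HPi x Hx)) as Hy.
  pose proof (half_map_axis_poly_pos bm gm b Pi HPi Hgm Hbm x Hx) as Nx.
  assert (Xx : 0 < Xsl B ap dp x) by (apply (HX x); lra).
  assert (Xy : 0 < Xsl B ap dp (Pi x)) by (apply (HX x); lra).
  exists (x * (x - Pi x) / ((1 + dp) * axis_poly bm gm x * Xsl B ap dp x * Xsl B ap dp (Pi x))).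
  split.
  { apply Rdiv_lt_0_compat; [nra|].
    apply Rmult_lt_0_compat; [apply Rmult_lt_0_compat; [apply Rmult_lt_0_compat|]|]; lra. }
  eapply is_derive_eq;
    [|apply (I_tilde_is_derive B ap dp Pi x _ ltac:(lra) ltac:(lra) Xy Xx
              (half_map_is_derive bm gm b Pi HPi Hgm Hbm x Hx))].
  assert (E : Delta_bar B ap dp bm gm x (Pi x) = (1 + dp) *
     (axis_poly bm gm x * Xsl B ap dp (Pi x) - axis_poly bm gm (Pi x) * Xsl B ap dp x) / (x - Pi x))
    by (rewrite axis_poly_Xsl_cross by lra; field; lra).
  rewrite E; field; repeat split; lra.
Qed.

Lemma Delta_bar_linear B ap dp bm gm x : bm <> 0 -> B - dp + ap * x <> 0 ->
  exists yr, forall y, Delta_bar B ap dp bm gm x y = bm * (B - dp + ap * x) * (y - yr).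
Proof.
  intros Hbm Hx; exists (- (bm * (B - dp) * x - ap - gm * (B - dp)) / (bm * (B - dp + ap * x))).
  intros y; unfold Delta_bar; field; split; assumption.
Qed.

Lemma Delta_bar_sign_above B ap dp bm gm x y0 : bm <> 0 -> 0 < B - dp + ap * x ->
  (forall y, Delta_bar B ap dp bm gm x y = 0 -> y > y0) ->
  bm * Delta_bar B ap dp bm gm x y0 < 0.
Proof.
  intros Hbm Hx Habove.
  destruct (Delta_bar_linear B ap dp bm gm x Hbm ltac:(lra)) as [yr Hlin].
  specialize (Habove yr ltac:(rewrite Hlin; ring)).
  assert (0 < bm * bm * (B - dp + ap * x))
    by (apply Rmult_lt_0_compat; [destruct (Rlt_or_le 0 bm); nra | lra]).
  rewrite Hlin; nra.
Qed.

Lemma Delta_bar_sign_below B ap dp bm gm x y0 : bm <> 0 -> 0 < B - dp + ap * x ->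
  (forall y, Delta_bar B ap dp bm gm x y = 0 -> y < y0) ->
  0 < bm * Delta_bar B ap dp bm gm x y0.
Proof.
  intros Hbm Hx Hbelow.
  destruct (Delta_bar_linear B ap dp bm gm x Hbm ltac:(lra)) as [yr Hlin].
  specialize (Hbelow yr ltac:(rewrite Hlin; ring)).
  assert (0 < bm * bm * (B - dp + ap * x))
    by (apply Rmult_lt_0_compat; [destruct (Rlt_or_le 0 bm); nra | lra]).
  rewrite Hlin; nra.
Qed.

Theorem lemma3p2 (B ap dp bm gm b : R) (Pi : R -> R) (J : R -> Prop) :
  B > dp -> dp > 0 ->
  (* Pi is the Poincare half-map of Z^- on [0,b[ *)
  Pi 0 = 0 ->
  (forall x, 0 < x < b -> half_map bm gm x (Pi x)) ->
  (* X^sl > 0 on [Pi x, x] for all x in [0,b[ *)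
  (forall x, 0 <= x < b -> forall u, Pi x <= u <= x -> 0 < Xsl B ap dp u) ->
  bm <> 0 -> gm > 0 ->
  is_interval J -> (forall x, J x -> 0 < x < b) ->
  (bm < 0 ->
     (curve_above B ap dp bm gm Pi J ->
        forall x, J x ->
          Delta_bar B ap dp bm gm x (Pi x) > 0 /\
          exists d, is_derive (I_tilde B ap dp Pi) x d /\ d > 0) /\
     (curve_below B ap dp bm gm Pi J ->
        forall x, J x ->
          Delta_bar B ap dp bm gm x (Pi x) < 0 /\
          exists d, is_derive (I_tilde B ap dp Pi) x d /\ d < 0)) /\
  (bm > 0 ->
     (curve_above B ap dp bm gm Pi J ->
        forall x, J x ->
          Delta_bar B ap dp bm gm x (Pi x) < 0 /\
          exists d, is_derive (I_tilde B ap dp Pi) x d /\ d < 0) /\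
     (curve_below B ap dp bm gm Pi J ->
        forall x, J x ->
          Delta_bar B ap dp bm gm x (Pi x) > 0 /\
          exists d, is_derive (I_tilde B ap dp Pi) x d /\ d > 0)).
Proof.
  intros _ Hdp _ HPi HX Hbm Hgm _ HJ.
  assert (Hslope : forall x, J x -> 0 < B - dp + ap * x).
  { intros x Jx; apply (Xsl_pos_numerator B ap dp x); [lra|].
    pose proof (HJ x Jx); pose proof (proj1 (HPi x (HJ x Jx))); apply (HX x); lra. }
  assert (Hderiv : forall x, J x -> exists k, 0 < k /\
            is_derive (I_tilde B ap dp Pi) x (k * Delta_bar B ap dp bm gm x (Pi x)))
    by (intros x Jx; exact (I_tilde_is_derive_Delta B ap dp bm gm b Pi x Hdp Hgm Hbm HPi HX
                                                    (HJ x Jx))).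
  split; intros Hbm_sign; split; intros Hcurve x Jx;
    destruct (Hderiv x Jx) as [k [Hk HI]];
    first [ pose proof (Delta_bar_sign_above B ap dp bm gm x (Pi x) Hbm (Hslope x Jx) (Hcurve x Jx))
          | pose proof (Delta_bar_sign_below B ap dp bm gm x (Pi x) Hbm (Hslope x Jx) (Hcurve x Jx))
          ];
    match goal with |- ?sign /\ _ => assert (HD : sign) by nra end;
    (split; [exact HD | eexists; split; [exact HI | nra]]).
Qed.
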